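(* The metric space $L_\infty$ satisfies $\operatorname{trasdim} L_\infty=\infty$.
   Context: Let $X=\bigsqcup_{i=1}^\infty\mathbb Z^i$ (disjoint union). For $a=(a_1,\dots,a_l)\in\mathbb Z^l$ and $b=(b_1,\dots,b_k)\in\mathbb Z^k$ with $l\le k$, let $a'=(a_1,\dots,a_l,0,\dots,0)\in\mathbb Z^k$, let $c=0$ if $l=k$ and $c=l+(l+1)+\dots+(k-1)$ if $l<k$, and set $d_\infty(a,b)=d_\infty(b,a)=\max\{d(a',b),c\}$, where $d$ is the sup-metric $d(x,y)=\max_j|x_j-y_j|$ on $\mathbb Z^k$. $L_\infty=(X,d_\infty)$. A family $\mathcal A$ of subsets is uniformly bounded if there is $C>0$ with $\operatorname{diam}A\le C$ for all $A\in\mathcal A$; it is $r$-disjoint if $d(A_1,A_2)\ge r$ for all distinct $A_1,A_2\in\mathcal A$. For a set $L$, $\mathrm{Fin}\,L$ is the collection of finite nonempty subsets of $L$. For $M\subset \mathrm{Fin}\,L$ and $\sigma\in\{\emptyset\}\cup\mathrm{Fin}\,L$, $M^\sigma=\{\tau\in\mathrm{Fin}\,L:\sigma\cup\tau\in M,\ \sigma\cap\tau=\emptyset\}$, and $M^a=M^{\{a\}}$. The ordinal $\operatorname{Ord}M$: $\operatorname{Ord}M=0$ iff $M=\emptyset$; $\operatorname{Ord}M\le\alpha$ iff $\operatorname{Ord}M^a<\alpha$ for every $a\in L$; $\operatorname{Ord}M=\alpha$ iff $\operatorname{Ord}M\le\alpha$ and not $\operatorname{Ord}M<\alpha$; $\operatorname{Ord}M=\infty$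 iff $\operatorname{Ord} M\le\alpha$ for no ordinal $\alpha$. For a metric space $(X,d)$, $A(X,d)$ is the set of $\sigma\in\mathrm{Fin}\,\mathbb N$ such that there do NOT exist uniformly bounded families $\mathcal V_i$, $i\in\sigma$, with $\bigcup_{i\in\sigma}\mathcal V_i$ covering $X$ and each $\mathcal V_i$ being $i$-disjoint. Define $\operatorname{trasdim}X=\operatorname{Ord}A(X,d)$, except $\operatorname{trasdim}X=-1$ iff $X$ is bounded. *)

From mathcomp Require Import all_boot all_order all_algebra.
From mathcomp Require Import finmap.
Set Implicit Arguments. Unset Strict Implicit. Unset Printing Implicit Defensive.
Import Order.TTheory GRing.Theory Num.Theory.
Local Open Scope fset_scope.

Inductive Ord : Type := osup : forall (I : Type), (I -> Ord) -> Ord.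

(* o <= p  iff every predecessor of o is < p ;  o < p iff o <= some predecessor of p *)
Fixpoint ole (o : Ord) : Ord -> Prop :=
  match o with
  | osup Ix f => fun p => forall i : Ix,
      (fix lt (q : Ord) : Prop :=
         match q with osup J g => exists j : J, ole (f i) (g j) end) p
  end.

Definition olt (o p : Ord) : Prop :=
  match p with osup J g => exists j : J, ole o (g j) end.

Definition FinL (L : nat -> Prop) (s : {fset nat}) : Prop :=
  s != fset0 /\ (forall a, a \in s -> L a).

Definition Msig (L : nat -> Prop) (M : {fset nat} -> Prop) (sigma : {fset nat})
  : {fset nat} -> Prop :=
  fun tau => FinL L tau /\ M (sigma `|` tau) /\ sigma `&` tau = fset0.

Definition Ma L M (a : nat) := Msig L M [fset a].

Definition is_empty_fam (M : {fset nat} -> Prop) := forall tau, ~ M tau.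

(* OrdLe L M alpha  <->  "Ord M <= alpha":  Ord M = 0 iff M empty;
   Ord M <= alpha iff for every a in L, Ord M^a < alpha, where
   "Ord N < alpha" means Ord N <= beta for some beta < alpha. *)
Inductive OrdLe (L : nat -> Prop) : ({fset nat} -> Prop) -> Ord -> Prop :=
| OrdLe_empty M alpha : is_empty_fam M -> OrdLe L M alpha
| OrdLe_step M alpha :
    (forall a, L a -> exists beta, olt beta alpha /\ OrdLe L (Ma L M a) beta) ->
    OrdLe L M alpha.

Definition Ord_infty L M : Prop := forall alpha : Ord, ~ OrdLe L M alpha.

Section Metric.
Variables (T : Type) (d : T -> T -> nat).

Definition bounded_space : Prop := exists C, forall x y : T, d x y <= C.

Definition diam_le (A : T -> Prop) (C : nat) : Prop :=
  forall x y, A x -> A y -> d x y <= C.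

Definition unif_bounded (V : (T -> Prop) -> Prop) : Prop :=
  exists C, forall A, V A -> diam_le A C.

Definition r_disjoint (V : (T -> Prop) -> Prop) (r : nat) : Prop :=
  forall A1 A2, V A1 -> V A2 -> A1 <> A2 ->
    forall x y, A1 x -> A2 y -> r <= d x y.

Definition posnat (i : nat) : Prop := 0 < i.

Definition Aset (sigma : {fset nat}) : Prop :=
  FinL posnat sigma /\
  ~ exists V : nat -> ((T -> Prop) -> Prop),
      (forall i, i \in sigma -> unif_bounded (V i) /\ r_disjoint (V i) i) /\
      (forall x, exists i, i \in sigma /\ exists A, V i A /\ A x).

Definition trasdim_infty : Prop := ~ bounded_space /\ Ord_infty posnat Aset.
End Metric.

(* X = disjoint union of Z^i, i >= 1: nonempty finite sequences of integers *)
Definition Xinf := {s : seq int | 0 < size s}.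

Definition dseq (a b : seq int) : nat :=
  let l := minn (size a) (size b) in
  let k := maxn (size a) (size b) in
  maxn (\max_(j < k) absz (nth 0%R a j - nth 0%R b j)%R)
       (\sum_(l <= j < k) j).

Definition dinf (x y : Xinf) : nat := dseq (val x) (val y).

From mathcomp Require Import all_boot all_order all_algebra.
From mathcomp Require Import finmap.
From mathcomp Require Import zify.
From Stdlib Require Import ClassicalEpsilon.
Set Implicit Arguments. Unset Strict Implicit. Unset Printing Implicit Defensive.

(* The shift graph on increasing k-tuples below N (a -- a' when a' drops the
   first entry of a and appends a larger one) has two conflicting features.
   Ramsey: for N large, every colouring with a fixed finite palette has a
   monochromatic shift edge.  Parity: if 2D + 3 <= k, two adjacent vertices
   within distance D of a vertex u have distances of different parities from
   u, because along a short walk every entry of u only slides by the number of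
   forward minus backward shifts.
   Truncated distance functions embed each shift graph into some Z^n inside
   L_oo with edges of length <= 1 and graph distance bounded by L_oo distance.
   Given uniformly bounded i-disjoint families covering L_oo with all i >= 2,
   colour a vertex by the index of the set covering its image and by the
   parity of its distance to a fixed point of that set: at a monochromatic
   edge both ends lie in the same set since 1 < i, contradicting parity.  So
   A(L_oo) contains every finite set of indices >= 2, and no ordinal bounds
   such a family. *)

Definition vertex (k N : nat) (s : seq nat) : bool :=
  (size s == k) && sorted ltn s && all (fun x => x < N) s.

Definition shift (a b : seq nat) : Prop :=
  exists2 z, b = rcons (behead a) z & last 0 a < z.

Lemma vertex_size k N s : vertex k N s -> size s = k.
Proof. by case/andP => /andP[/eqP]. Qed.

Lemma vertex1 N i : vertex 1 N [:: i] = (i < N).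
Proof. by rewrite /vertex /= andbT. Qed.

Lemma vertex_rcons k N a z : 0 < k -> vertex k N a -> last 0 a < z -> z < N ->
  vertex k.+1 N (rcons a z).
Proof.
case: a => [|x a] k_gt0; first by move/vertex_size=> k0; rewrite -k0 in k_gt0.
case/andP=> /andP[/eqP <- /= path_a] /= /andP[lt_xN lt_aN] lt_last lt_zN.
by rewrite /vertex /= size_rcons eqxx rcons_path all_rcons path_a lt_xN lt_zN lt_aN /= andbT.
Qed.

Lemma shift_ramsey k (C : finType) : 0 < k -> exists N,
  forall phi : seq nat -> C, exists x y,
    [/\ vertex k N x, vertex k N y, shift x y & phi x = phi y].
Proof.
elim: k C => [//|[|k] IH] C _.
  exists #|C|.+1 => phi.
  have /injectivePn [i [j neq_ij phi_ij]] :
      ~~ injectiveb (fun i : 'I_#|C|.+1 => phi [:: val i]).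
    by apply/injectiveP => /leq_card; rewrite card_ord ltnn.
  have [lt_ij|lt_ji|/val_inj eq_ij] := ltngtP i j; last by rewrite eq_ij eqxx in neq_ij.
  - by exists [:: val i], [:: val j]; rewrite !vertex1 !ltn_ord; split=> //; exists j.
  - by exists [:: val j], [:: val i]; rewrite !vertex1 !ltn_ord; split=> //; exists i.
(* colour a k-tuple by the set of colours of its admissible one-point extensions *)
have [N ramsey_k] := IH {set C} (erefl _).
exists N => phi.
pose psi a := [set phi (rcons a (val z)) | z in [pred z : 'I_N | last 0 a < z]].
have [a [a' [Va Va' [z Ea' lt_z] psi_aa']]] := ramsey_k psi.
have lt_zN : z < N.
  by move: Va' => /andP[_ /allP]; apply; rewrite Ea' mem_rcons mem_head.
have : phi (rcons a z) \in psi a by apply/imsetP; exists (Ordinal lt_zN).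
rewrite psi_aa' => /imsetP [x]; rewrite inE => lt_zx phi_ax.
rewrite Ea' last_rcons in lt_zx.
exists (rcons a z), (rcons a' x); split.
- exact: vertex_rcons.
- by apply: vertex_rcons; rewrite // Ea' last_rcons.
- exists x; last by rewrite last_rcons.
  by case: a Va Ea' {lt_z psi_aa' phi_ax} => [|y a] //= _ ->.
- exact: phi_ax.
Qed.

Definition adjacent (k N : nat) (a b : seq nat) : Prop :=
  [/\ vertex k N a, vertex k N b & shift a b \/ shift b a].

Lemma adjacent_sym k N a b : adjacent k N a b -> adjacent k N b a.
Proof. by case=> Va Vb sab; split=> //; case: sab; [right|left]. Qed.

Inductive walk (k N : nat) : nat -> seq nat -> seq nat -> Prop :=
| walk0 u : walk k N 0 u u
| walkS t u v w : adjacent k N u v -> walk k N t v w -> walk k N t.+1 u w.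

Lemma nth_shift a b q : shift a b -> q.+1 < size a -> nth 0 b q = nth 0 a q.+1.
Proof.
case=> z -> _ lt_qa; rewrite nth_rcons size_behead.
have -> : q < (size a).-1 by lia.
by rewrite nth_behead.
Qed.

Lemma walk_nth_offset k N t u w : walk k N t u w -> exists f g, f + g = t /\
  forall p, t <= p -> p + t < k -> nth 0 w (p + g - f) = nth 0 u p.
Proof.
elim=> [v|{}t v x {}w [Vv Vx svx] _ [f [g [fg_t IH]]]].
  by exists 0, 0; split=> // p _ _; rewrite addn0 subn0.
have size_v := vertex_size Vv.
case: svx => svx.
  exists f.+1, g; split=> [|p le_tp lt_pk]; first by lia.
  have -> : p + g - f.+1 = p.-1 + g - f by lia.
  by rewrite IH ?(nth_shift svx); [congr nth; lia|lia|lia|lia].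
exists f, g.+1; split=> [|p le_tp lt_pk]; first by lia.
have -> : p + g.+1 - f = p.+1 + g - f by lia.
by rewrite IH ?(nth_shift svx) ?(vertex_size Vx); lia.
Qed.

(* Entry D.+1 of u shows up in y both at index D + g1 - f1 (via x) and at
   index D.+1 + g2 - f2, and the entries of y are distinct. *)
Lemma walk_shift_parity k N D t1 t2 u x y :
  2 * D + 3 <= k -> vertex k N x -> vertex k N y -> shift x y ->
  walk k N t1 u x -> walk k N t2 u y -> t1 <= D -> t2 <= D -> odd t1 != odd t2.
Proof.
move=> le_k Vx Vy sxy /walk_nth_offset[f1 [g1 [fg1 nth1]]]
  /walk_nth_offset[f2 [g2 [fg2 nth2]]] le_t1 le_t2.
have uniq_y : uniq y.
  by case/andP: Vy => /andP[_ /(sorted_uniq ltn_trans ltnn)].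
have : nth 0 y (D + g1 - f1) = nth 0 y (D.+1 + g2 - f2).
  rewrite (nth_shift sxy) ?(vertex_size Vx); last by lia.
  have -> : (D + g1 - f1).+1 = D.+1 + g1 - f1 by lia.
  by rewrite nth1 ?nth2 //; lia.
move/eqP; rewrite nth_uniq ?(vertex_size Vy) //; [move/eqP => eq_idx|lia|lia].
have /(congr1 odd) : t1 + t2 = (f1 + g2).*2.+1 by rewrite -addnn; lia.
by rewrite oddD /= odd_double; case: (odd t1); case: (odd t2).
Qed.

Section TruncatedDistance.
Variables k N T : nat.

Definition walkb t u v : bool :=
  if excluded_middle_informative (walk k N t u v) then true else false.

Lemma walkbP t u v : reflect (walk k N t u v) (walkb t u v).
Proof. by rewrite /walkb; case: excluded_middle_informative; constructor. Qed.

(* the length of a shortest walk from u to v if it is below T, and T otherwise *)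
Definition trunc_dist u v : nat := find (fun t => walkb t u v) (iota 0 T).

Lemma trunc_dist_le u v : trunc_dist u v <= T.
Proof. by rewrite -[T in _ <= T](size_iota 0) find_size. Qed.

Lemma trunc_distP u v : trunc_dist u v < T -> walk k N (trunc_dist u v) u v.
Proof.
move=> lt_dT; have has_walk : has (fun t => walkb t u v) (iota 0 T).
  by rewrite has_find size_iota.
by move: (nth_find 0 has_walk); rewrite nth_iota // add0n => /walkbP.
Qed.

Lemma trunc_dist_min u v t : t < T -> walk k N t u v -> trunc_dist u v <= t.
Proof.
move=> lt_tT walk_t; rewrite leqNgt; apply/negP => /(before_find 0).
by rewrite nth_iota // add0n => /negbT/walkbP.
Qed.

Lemma trunc_dist_refl u : 0 < T -> trunc_dist u u = 0.
Proof. by move=> T_gt0; apply/eqP; rewrite -leqn0 trunc_dist_min //; apply: walk0. Qed.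

Lemma trunc_dist_adjacent u v w :
  adjacent k N u v -> trunc_dist u w <= (trunc_dist v w).+1.
Proof.
move=> adj_uv; have [lt_dT|le_Td] := ltnP (trunc_dist v w) T.
  have [lt_dT'|le_Td'] := ltnP (trunc_dist v w).+1 T.
    exact/trunc_dist_min/(walkS adj_uv)/trunc_distP.
  exact: leq_trans (trunc_dist_le _ _) le_Td'.
by apply: leq_trans (trunc_dist_le _ _) _; apply: leq_trans le_Td _.
Qed.

End TruncatedDistance.

Fixpoint tuples (k N : nat) : seq (seq nat) :=
  if k is k'.+1 then [seq x :: s | x <- iota 0 N, s <- tuples k' N] else [:: [::]].

Lemma vertex_in_tuples k N s : vertex k N s -> s \in tuples k N.
Proof.
case/andP=> /andP[/eqP <- _]; elim: s => [//|x s IH] /= /andP[lt_xN lt_sN].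
by apply/allpairsP; exists (x, s); rewrite mem_iota lt_xN IH.
Qed.

(* One coordinate per k-tuple below N, holding the truncated distance to it;
   the extra coordinate [::] only makes the sequence nonempty. *)
Definition Linf_embed (k N T : nat) (u : seq nat) : Xinf :=
  exist _ [seq Posz (trunc_dist k N T u w) | w <- [::] :: tuples k N] isT.

Lemma dseq_eq_size (a b : seq int) : size a = size b ->
  dseq a b = \max_(j < size a) `|(nth 0 a j - nth 0 b j)%R|%N.
Proof. by move=> eq_ab; rewrite /dseq eq_ab minnn maxnn big_geq // maxn0. Qed.

Lemma dinf_embed_adjacent k N T x y :
  adjacent k N x y -> dinf (Linf_embed k N T x) (Linf_embed k N T y) <= 1.
Proof.
move=> adj_xy; rewrite /dinf dseq_eq_size ?size_map //.
apply/bigmax_leqP => j _; rewrite !(nth_map [::]) //.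
have := trunc_dist_adjacent T (nth [::] ([::] :: tuples k N) j) adj_xy.
have := trunc_dist_adjacent T (nth [::] ([::] :: tuples k N) j) (adjacent_sym adj_xy).
lia.
Qed.

Lemma trunc_dist_le_dinf k N T u v : 0 < T -> vertex k N v ->
  trunc_dist k N T u v <= dinf (Linf_embed k N T u) (Linf_embed k N T v).
Proof.
move=> T_gt0 Vv; rewrite /dinf dseq_eq_size ?size_map //.
have v_in : v \in [::] :: tuples k N by rewrite inE vertex_in_tuples ?orbT.
have lt_v : index v ([::] :: tuples k N) < size ([::] :: tuples k N) by rewrite index_mem.
apply: leq_trans (leq_bigmax (Ordinal lt_v)).
by rewrite !(nth_map [::]) // nth_index // trunc_dist_refl //; lia.
Qed.

Definition shift_embeddable (T : Type) (d : T -> T -> nat) : Prop :=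
  forall k N D, exists F : seq nat -> T,
    (forall x y, adjacent k N x y -> d (F x) (F y) <= 1) /\
    (forall u v, vertex k N v -> d (F u) (F v) <= D ->
       exists2 t, t <= D & walk k N t u v).

Lemma Linf_shift_embeddable : shift_embeddable dinf.
Proof.
move=> k N D; exists (Linf_embed k N D.+1); split=> [x y|u v Vv le_D].
  exact: dinf_embed_adjacent.
have le_dist := leq_trans (trunc_dist_le_dinf u (ltn0Sn D) Vv) le_D.
by exists (trunc_dist k N D.+1 u v); last exact: trunc_distP.
Qed.

(* Colour each vertex by its label and by the parity of its distance to its
   center; a monochromatic shift edge has equal labels, and parity forbids
   a common center. *)
Lemma shift_clusters_separate (C : finType) D : exists N,
  forall (lab : seq nat -> C) (center : seq nat -> seq nat),
    (forall v, vertex (2 * D + 3) N v ->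
       exists2 t, t <= D & walk (2 * D + 3) N t (center v) v) ->
    exists x y, [/\ adjacent (2 * D + 3) N x y, lab x = lab y & center x <> center y].
Proof.
set k := 2 * D + 3; have [N ramsey] := @shift_ramsey k (C * bool)%type (ltn_addl _ (ltn0Sn 2)).
exists N => lab center near.
pose dist_center v := trunc_dist k N D.+1 (center v) v.
have dist_centerP v : vertex k N v -> walk k N (dist_center v) (center v) v /\ dist_center v <= D.
  move=> /near[t le_tD walk_t].
  have le_dist : dist_center v <= D := leq_trans (@trunc_dist_min k N D.+1 _ _ t le_tD walk_t) le_tD.
  by split=> //; apply: trunc_distP.
have [x [y [Vx Vy sxy [lab_xy odd_xy]]]] := ramsey (fun v => (lab v, odd (dist_center v))).
exists x, y; split=> //; first by split=> //; left.
move=> center_xy; have [walk_x le_x] := dist_centerP x Vx.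
have [walk_y le_y] := dist_centerP y Vy.
rewrite center_xy in walk_x.
by have /negP := walk_shift_parity (leqnn k) Vx Vy sxy walk_x walk_y le_x le_y; rewrite odd_xy.
Qed.

Lemma uniform_bound_seq (I : eqType) (P : I -> nat -> Prop) (s : seq I) :
  (forall i C C', C <= C' -> P i C -> P i C') ->
  (forall i, i \in s -> exists C, P i C) -> exists C, forall i, i \in s -> P i C.
Proof.
move=> P_mono; elim: s => [|i s IH] bounded; first by exists 0.
have [C PC] := bounded i (mem_head _ _).
have [C' PC'] : exists C', forall j, j \in s -> P j C'.
  by apply: IH => j s_j; apply: bounded; rewrite inE s_j orbT.
exists (maxn C C') => j; rewrite inE => /predU1P[->|/PC'].
  exact: P_mono (leq_maxl _ _) PC.
exact: P_mono (leq_maxr _ _).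
Qed.

Lemma Aset_of_shift_embeddable (T : Type) (d : T -> T -> nat) (tau : {fset nat}) :
  shift_embeddable d -> tau != fset0 -> {subset tau <= [pred i | 1 < i]} ->
  Aset d tau.
Proof.
move=> embeddable tau_neq0 tau_gt1; split.
  by split=> // i /tau_gt1; rewrite inE => /ltnW.
case=> V [VP cover].
have [D diamD] : exists D, forall i, i \in tau -> forall A, V i A -> diam_le d A D.
  apply: uniform_bound_seq => [i C C' le_CC' diamC A /diamC diamA x y Ax Ay|i /VP[[C bdd] _]].
    exact: leq_trans (diamA x y Ax Ay) le_CC'.
  by exists C.
have [cell cellP] : exists cell : T -> nat * (T -> Prop),
    forall x, [/\ (cell x).1 \in tau, V (cell x).1 (cell x).2 & (cell x).2 x].
  apply: (choice (fun x (p : nat * (T -> Prop)) => [/\ p.1 \in tau, V p.1 p.2 & p.2 x])).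
  by move=> x; have [i [tau_i [A [ViA Ax]]]] := cover x; exists (i, A).
pose B := \max_(i <- tau) i.
have lt_B i : i \in tau -> i < B.+1 by rewrite ltnS => tau_i; apply: leq_bigmax_seq.
have [N separate] := shift_clusters_separate 'I_B.+1 D.
have [F [F_adj F_walk]] := embeddable (2 * D + 3) N D.
pose base p := epsilon (inhabits [::]) (fun u => cell (F u) = p).
pose center v := base (cell (F v)).
have cell_center v : cell (F (center v)) = cell (F v).
  exact: (epsilon_spec (inhabits [::]) (fun u => cell (F u) = cell (F v)) (ex_intro _ v erefl)).
have [|x [y [adj_xy lab_xy center_xy]]] :=
    separate (fun v => inord (cell (F v)).1) center.
  move=> v Vv; apply: F_walk => //; have [tau_i ViA Av] := cellP (F v).
  apply: diamD tau_i _ ViA _ _ _ Av.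
  by have [_ _] := cellP (F (center v)); rewrite cell_center.
have i_xy : (cell (F x)).1 = (cell (F y)).1.
  have tau_cell v : (cell (F v)).1 \in tau by case: (cellP (F v)).
  by move/(congr1 val): lab_xy; rewrite /= !inordK ?lt_B ?tau_cell.
have A_xy : (cell (F x)).2 <> (cell (F y)).2.
  move=> A_xy; apply: center_xy; rewrite /center; congr base.
  by move: i_xy A_xy; case: (cell (F x)); case: (cell (F y)) => ? ? ? ? /= -> ->.
have [tau_i ViA Ax] := cellP (F x); have [_ ViB By] := cellP (F y).
rewrite -i_xy in ViB; have [_ disjoint_i] := VP _ tau_i.
have := disjoint_i _ _ ViA ViB A_xy _ _ Ax By.
have := F_adj x y adj_xy; have := tau_gt1 _ tau_i; rewrite inE; lia.
Qed.

Local Open Scope fset_scope.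

Lemma stable_not_OrdLe (L : nat -> Prop) (Q : ({fset nat} -> Prop) -> Prop) :
  (forall M, Q M -> ~ is_empty_fam M) ->
  (forall M, Q M -> exists2 a, L a & Q (Ma L M a)) ->
  forall M alpha, OrdLe L M alpha -> ~ Q M.
Proof.
(* OrdLe occurs nested under an existential, so its induction principle has no
   induction hypothesis for OrdLe_step: recurse by hand. *)
move=> Q_nonempty Q_step; fix IH 3; intros M alpha leM QM.
destruct leM as [M alpha emptyM|M alpha stepM].
- exact: Q_nonempty QM emptyM.
- destruct (Q_step M QM) as [a La Qa]; destruct (stepM a La) as [beta [_ le_beta]].
  exact: IH _ _ le_beta Qa.
Qed.

(* The invariant passing from M to M^a for every a in P outside sigma. *)
Definition contains_Fin_off (P : pred nat) (M : {fset nat} -> Prop) : Prop :=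
  exists sigma : {fset nat}, forall tau, tau != fset0 -> {subset tau <= P} ->
    tau `&` sigma = fset0 -> M tau.

Lemma Ord_infty_of_Fin (L : nat -> Prop) (P : pred nat) (M : {fset nat} -> Prop) :
  (forall a, P a -> L a) -> (forall s : {fset nat}, exists2 a, P a & a \notin s) ->
  (forall tau, tau != fset0 -> {subset tau <= P} -> M tau) -> Ord_infty L M.
Proof.
move=> PL P_fresh M_full alpha.
have nonempty M' : contains_Fin_off P M' -> ~ is_empty_fam M'.
  move=> [sigma M'_full] M'_empty; have [a Pa sigma'a] := P_fresh sigma.
  apply: (M'_empty [fset a]); apply: M'_full.
  - by apply/fset0Pn; exists a; rewrite inE.
  - by move=> x; rewrite inE => /eqP ->.
  - by apply/eqP; rewrite fsetI_eq0 fdisjoint1X.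
have step M' : contains_Fin_off P M' -> exists2 a, L a & contains_Fin_off P (Ma L M' a).
  move=> [sigma M'_full]; have [a Pa sigma'a] := P_fresh sigma.
  exists a; first exact: PL.
  exists (a |` sigma) => tau tau_neq0 tauP.
  move/eqP; rewrite fsetI_eq0 fdisjointXU fdisjointX1 => /andP[tau'a tau_sigma].
  split; last split.
  - by split=> // x /tauP /PL.
  - apply: M'_full.
    + by apply/fset0Pn; exists a; rewrite !inE eqxx.
    + by move=> x; rewrite !inE => /predU1P[->|/tauP].
    + by apply/eqP; rewrite fsetI_eq0 fdisjointUX fdisjoint1X sigma'a.
  - by apply/eqP; rewrite fsetI_eq0 fdisjoint1X.
move/(stable_not_OrdLe nonempty step); apply.
by exists fset0 => tau tau_neq0 tauP _; apply: M_full.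
Qed.

Lemma fresh_gt1 (s : {fset nat}) : exists2 a, 1 < a & a \notin s.
Proof.
exists (\max_(i <- s) i).+2 => //; apply/negP => /(@leq_bigmax_seq _ _ xpredT id) /(_ isT).
by rewrite ltnNge leqnSn.
Qed.

Lemma Linf_unbounded : ~ bounded_space dinf.
Proof.
case=> C bdd.
pose x : Xinf := exist _ [:: 0%R] isT.
pose y : Xinf := exist _ (nseq C.+2 0%R) isT.
have := bdd x y; rewrite /dinf /dseq /= size_nseq big_nat_recr //= => le_C.
by have := leq_trans (leq_maxr _ _) le_C; lia.
Qed.

Theorem theorem3 : trasdim_infty dinf.
Proof.
split; first exact: Linf_unbounded.
apply: (@Ord_infty_of_Fin _ [pred n | 1 < n]) => [a /ltnW //|s|tau].
  exact: fresh_gt1.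
exact: Aset_of_shift_embeddable Linf_shift_embeddable.
Qed.
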